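(* For every base $\mathcal{B}$ and ILL formula $\varphi$: if $\Vdash^{\varnothing}_{\mathcal{B}}\varphi$, then $\Vdash^{\varnothing}_{\mathcal{B}}!\varphi$.
   Context: Fix a set $\mathbb{A}$ of propositional atoms. ILL formulae: $\phi ::= p\in\mathbb{A} \mid \top \mid 0 \mid 1 \mid \phi\multimap\phi \mid \phi\otimes\phi \mid \phi\,\&\,\phi \mid \phi\oplus\phi \mid\ !\phi$. All multisets are finite; ''$\Gamma,\Delta$'' denotes multiset union. Atomic rules and bases: an atomic sequent is $P\Rightarrow p$ with $P$ a multiset of atoms, $p$ an atom. An atomic box is a multiset of atomic sequents. An atomic rule is a triple $\langle\mathbf{A},\mathbf{S},p\rangle$ with $\mathbf{A}$ a multiset of atomic boxes, $\mathbf{S}$ an atomic box, $p$ an atom. A base is a set of atomic rules. An atom $p$ is persistent in $\mathcal{B}$ if some $\langle\varnothing,\mathbf{S},p\rangle\in\mathcal{B}$ has $\mathbf{S}\neq\varnothing$. Derivability $\vdash_{\mathcal{B}}$: (Ref) $p\vdash_{\mathcal{B}}p$; (App) if $\langle\mathbf{A},\mathbf{S},p\rangle\in\mathcal{B}$ with $\mathbf{A}=\{\mathbf{T}_1,\dots,\mathbf{T}_m\}$, and there are atomic multisets $C_1,\dots,C_n$ ($n\ge m$) and a multiset $D=\{d_{m+1},\dots,d_n\}$ of atoms persistent in $\mathcal{B}$ such that $C_i,Q\vdash_{\mathcal{B}}q$ for every $i\le m$ and every $Q\Rightarrow q\in\mathbf{T}_i$, $C_j\vdash_{\mathcal{B}}d_j$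 for every $m<j\le n$, and $D,U\vdash_{\mathcal{B}}v$ for every $U\Rightarrow v\in\mathbf{S}$, then $C_1,\dots,C_n\vdash_{\mathcal{B}}p$. Support $\Vdash^L_{\mathcal{B}}$ (base $\mathcal{B}$, atomic multiset $L$), by induction on formulae: $\Vdash^L_{\mathcal{B}}p$ iff $L\vdash_{\mathcal{B}}p$; $\Vdash^L_{\mathcal{B}}\varphi\multimap\psi$ iff $\varphi\Vdash^L_{\mathcal{B}}\psi$; $\Vdash^L_{\mathcal{B}}\varphi\otimes\psi$ iff for all $\mathcal{C}\supseteq\mathcal{B}$, atomic $K$, atoms $p$: if $\varphi,\psi\Vdash^K_{\mathcal{C}}p$ then $\Vdash^{L,K}_{\mathcal{C}}p$; $\Vdash^L_{\mathcal{B}}1$ iff for all $\mathcal{C}\supseteq\mathcal{B}$, $K$, $p$: if $\Vdash^K_{\mathcal{C}}p$ then $\Vdash^{L,K}_{\mathcal{C}}p$; $\Vdash^L_{\mathcal{B}}\varphi\&\psi$ iff $\Vdash^L_{\mathcal{B}}\varphi$ and $\Vdash^L_{\mathcal{B}}\psi$; $\Vdash^L_{\mathcal{B}}\varphi\oplus\psi$ iff for all $\mathcal{C}\supseteq\mathcal{B}$, $K$, $p$: if $\varphi\Vdash^K_{\mathcal{C}}p$ and $\psi\Vdash^K_{\mathcal{C}}p$ then $\Vdash^{L,K}_{\mathcal{C}}p$; $\Vdash^L_{\mathcal{B}}0$ iff $\Vdash^{L,K}_{\mathcal{B}}p$ for all atoms $p$ and atomic $K$; $\Vdash^L_{\mathcal{B}}\top$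 always; $\Vdash^L_{\mathcal{B}}!\varphi$ iff for all $\mathcal{C}\supseteq\mathcal{B}$, $K$, $p$: if (for all $\mathcal{D}\supseteq\mathcal{C}$, $\Vdash^{\varnothing}_{\mathcal{D}}\varphi$ implies $\Vdash^K_{\mathcal{D}}p$) then $\Vdash^{L,K}_{\mathcal{C}}p$. For nonempty multisets: $\Vdash^L_{\mathcal{B}}\Gamma,\Delta$ iff $L=K,M$ with $\Vdash^K_{\mathcal{B}}\Gamma$ and $\Vdash^M_{\mathcal{B}}\Delta$. For a nonempty antecedent written $!\Delta,\Theta$, where $!\Delta$ collects the formulae with top-level connective $!$ (with $\Delta$ the formulae under those $!$) and $\Theta$ contains none: $!\Delta,\Theta\Vdash^L_{\mathcal{B}}\varphi$ iff for all $\mathcal{C}\supseteq\mathcal{B}$ and atomic $K$, if $\Vdash^{\varnothing}_{\mathcal{C}}\delta$ for every $\delta\in\Delta$ and $\Vdash^K_{\mathcal{C}}\Theta$ then $\Vdash^{L,K}_{\mathcal{C}}\varphi$ (when $\Theta$ is empty, $K$ is empty). An empty antecedent: $\varnothing\Vdash^L_{\mathcal{B}}\varphi$ means $\Vdash^L_{\mathcal{B}}\varphi$. *)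

From Stdlib Require Import List Permutation.
Import ListNotations.
Set Implicit Arguments.

Section ILL.
Variable Atom : Type.

(** Finite multisets are represented by lists; multiset equality is
    [Permutation] and multiset union is [++]. *)

Inductive formula : Type :=
| FAtom : Atom -> formula
| FTop : formula
| FZero : formula
| FOne : formula
| FImp : formula -> formula -> formula
| FTensor : formula -> formula -> formula
| FWith : formula -> formula -> formula
| FPlus : formula -> formula -> formula
| FBang : formula -> formula.

Definition aseq : Type := (list Atom * Atom)%type.
Definition abox : Type := list aseq.
Definition arule : Type := (list abox * abox * Atom)%type.
Definition base : Type := arule -> Prop.

Definition base_incl (B C : base) : Prop := forall r, B r -> C r.

Definition persistent (B : base) (p : Atom) : Prop :=
  exists S : abox, S <> [] /\ B ([], S, p).

Inductive derives (B : base) : list Atom -> Atom -> Prop :=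
| der_ref : forall L p, Permutation L [p] -> derives B L p
| der_app : forall (As : list abox) (S : abox) (p : Atom)
                   (Cs1 Cs2 : list (list Atom)) (D : list Atom) (L : list Atom),
    B (As, S, p) ->
    Forall2 (fun (C : list Atom) (T : abox) =>
               forall Q q, In (Q, q) T -> derives B (C ++ Q) q) Cs1 As ->
    Forall2 (fun (C : list Atom) (d : Atom) => derives B C d) Cs2 D ->
    Forall (persistent B) D ->
    (forall U v, In (U, v) S -> derives B (D ++ U) v) ->
    Permutation L (concat (Cs1 ++ Cs2)) ->
    derives B L p.

(** Antecedent items: a formula in an antecedent, either of the form !delta
    (we keep the support predicate of delta) or not (we keep its own
    support predicate). *)
Inductive ante_item : Type :=
| BangItem : (base -> list Atom -> Prop) -> ante_item
| PlainItem : (base -> list Atom -> Prop) -> ante_item.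

Definition mk_item (self : base -> list Atom -> Prop)
           (bang_body : option (base -> list Atom -> Prop)) : ante_item :=
  match bang_body with
  | Some b => BangItem b
  | None => PlainItem self
  end.

Definition bang_parts (l : list ante_item) : list (base -> list Atom -> Prop) :=
  flat_map (fun it => match it with BangItem b => [b] | PlainItem _ => [] end) l.

Definition plain_parts (l : list ante_item) : list (base -> list Atom -> Prop) :=
  flat_map (fun it => match it with BangItem _ => [] | PlainItem s => [s] end) l.

Fixpoint multi_supp (C : base) (K : list Atom)
         (x : base -> list Atom -> Prop) (r : list (base -> list Atom -> Prop))
         : Prop :=
  match r with
  | [] => x C K
  | y :: r' => exists K1 K2, Permutation K (K1 ++ K2) /\ x C K1 /\ multi_supp C K2 y r'
  end.

Definition seq_supp (B : base) (L : list Atom) (items : list ante_item)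
           (goal : base -> list Atom -> Prop) : Prop :=
  forall (C : base) (K : list Atom), base_incl B C ->
    (forall d, In d (bang_parts items) -> d C []) ->
    match plain_parts items with
    | [] => K = []
    | x :: r => multi_supp C K x r
    end ->
    goal C (L ++ K).

Fixpoint supp (B : base) (L : list Atom) (phi : formula) {struct phi} : Prop :=
  match phi with
  | FAtom p => derives B L p
  | FImp a b =>
      seq_supp B L
        [mk_item (fun C K => supp C K a)
                 (match a with FBang d => Some (fun C K => supp C K d) | _ => None end)]
        (fun C K => supp C K b)
  | FTensor a b =>
      forall (C : base) (K : list Atom) (p : Atom), base_incl B C ->
        seq_supp C K
          [mk_item (fun C K => supp C K a)
                   (match a with FBang d => Some (fun C K => supp C K d) | _ => None end);
           mk_item (fun C K => supp C K b)
                   (match b with FBang d => Some (fun C K => supp C K d) | _ => None end)]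
          (fun D M => derives D M p) ->
        derives C (L ++ K) p
  | FOne =>
      forall (C : base) (K : list Atom) (p : Atom), base_incl B C ->
        derives C K p -> derives C (L ++ K) p
  | FWith a b => supp B L a /\ supp B L b
  | FPlus a b =>
      forall (C : base) (K : list Atom) (p : Atom), base_incl B C ->
        seq_supp C K
          [mk_item (fun C K => supp C K a)
                   (match a with FBang d => Some (fun C K => supp C K d) | _ => None end)]
          (fun D M => derives D M p) ->
        seq_supp C K
          [mk_item (fun C K => supp C K b)
                   (match b with FBang d => Some (fun C K => supp C K d) | _ => None end)]
          (fun D M => derives D M p) ->
        derives C (L ++ K) p
  | FZero => forall (K : list Atom) (p : Atom), derives B (L ++ K) p
  | FTop => True
  | FBang a =>
      forall (C : base) (K : list Atom) (p : Atom), base_incl B C ->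
        (forall D : base, base_incl C D -> supp D [] a -> derives D K p) ->
        derives C (L ++ K) p
  end.

End ILL.

(* Support is persistent along base extensions: an atomic derivation in B is
   one in any C containing B, so atoms and 0 persist; & persists componentwise;
   every other connective already quantifies over all extensions of the base.
   Hence if phi is supported in B, the premise of the clause for !phi at an
   extension C can be instantiated at D := C itself. *)

From Stdlib Require Import List Permutation.
Import ListNotations.

Section Persistence.
Context {Atom : Type}.
Implicit Types (B C : base Atom) (L : list Atom) (phi : formula Atom).

Lemma base_incl_refl B : base_incl B B.
Proof. now intros r. Qed.

Lemma base_incl_trans {B C} {D : base Atom} :
  base_incl B C -> base_incl C D -> base_incl B D.
Proof. intros HBC HCD r Hr; now apply HCD, HBC. Qed.

Lemma persistent_mono {B C} (p : Atom) :
  base_incl B C -> persistent B p -> persistent C p.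
Proof. intros HBC [S [HS HB]]; exists S; split; [exact HS | now apply HBC]. Qed.

Lemma derives_mono {B C} : base_incl B C -> forall L p, derives B L p -> derives C L p.
Proof.
  (* [derives_ind] ignores the premises nested under [Forall2], hence [fix]. *)
  intros HBC; fix IH 3.
  intros L p [L' p' HL | As S q Cs1 Cs2 D L' HB HT HD HP HS HL].
  - now apply der_ref.
  - apply der_app with As S Cs1 Cs2 D; [now apply HBC | | | | | exact HL].
    + clear - IH HT; induction HT as [| Cs T Cs1 As HCT _ IHT]; constructor; [| exact IHT].
      intros Q r Hin; exact (IH _ _ (HCT Q r Hin)).
    + clear - IH HD; induction HD as [| Cs d Cs2 D HCd _ IHD]; constructor;
        [exact (IH _ _ HCd) | exact IHD].
    + eapply Forall_impl; [| exact HP]; intros d; exact (persistent_mono d HBC).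
    + intros U v Hin; exact (IH _ _ (HS U v Hin)).
Qed.

Lemma seq_supp_mono {B C} L (items : list (ante_item Atom))
      (goal : base Atom -> list Atom -> Prop) :
  base_incl B C -> seq_supp B L items goal -> seq_supp C L items goal.
Proof.
  intros HBC H D K HCD; apply H; exact (base_incl_trans HBC HCD).
Qed.

Lemma supp_mono {B C} L phi : base_incl B C -> supp B L phi -> supp C L phi.
Proof.
  intros HBC; induction phi as [a | | | | phi1 _ phi2 _ | | phi1 IH1 phi2 IH2 | |];
    intros H; cbn in *.
  - exact (derives_mono HBC _ _ H).
  - exact I.
  - intros K p; exact (derives_mono HBC _ _ (H K p)).
  - intros D K p HCD; apply H; exact (base_incl_trans HBC HCD).
  - exact (seq_supp_mono _ _ _ HBC H).
  - intros D K p HCD; apply H; exact (base_incl_trans HBC HCD).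
  - destruct H as [H1 H2]; split; [exact (IH1 H1) | exact (IH2 H2)].
  - intros D K p HCD; apply H; exact (base_incl_trans HBC HCD).
  - intros D K p HCD; apply H; exact (base_incl_trans HBC HCD).
Qed.

End Persistence.

Theorem corollary1 (Atom : Type) (B : base Atom) (phi : formula Atom) :
  supp B [] phi -> supp B [] (FBang phi).
Proof.
  intros Hphi C K p HBC Hbang; cbn.
  apply Hbang; [apply base_incl_refl |].
  exact (supp_mono [] phi HBC Hphi).
Qed.
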